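(* If (a) $\mathrm{Sol}(0)$ is a singleton and (b) $X^\infty\cap\mathcal{K}(f)=\{0\}$, then the set-valued map $\mathrm{Sol}(\cdot)$ is lower semicontinuous at $0$. Conversely, if $\mathrm{Sol}(\cdot)$ is lower semicontinuous at $0$, then (a) holds; and if in addition $X$ and $f$ are convex, then (b) holds as well.
   Context: Standing assumptions: $f:\mathbb{R}^n\to\mathbb{R}\cup\{\pm\infty\}$ is proper (never $-\infty$ and finite at some point) and lower semicontinuous; $X\subset\mathbb{R}^n$ is a nonempty closed set with $\operatorname{dom}f\cap X$ unbounded. $X^\infty=\{u:\exists t_k\to+\infty,\ \exists x_k\in X,\ x_k/t_k\to u\}$; $f^\infty(d)=\inf\{\liminf_{k} f(t_kd_k)/t_k:\ t_k\to+\infty,\ d_k\to d\}$; $\mathcal{K}(f)=\{d: f^\infty(d)\le 0\}$. For $u\in\mathbb{R}^n$, $f_u(x)=f(x)-\langle u,x\rangle$ and $\mathrm{Sol}(u)=\{x\in X: f_u(x)\le f_u(y)\ \forall y\in X\}$. A set-valued map $F$ is lower semicontinuous at $\bar u$ if $F(\bar u)\ne\emptyset$ and for every open $V$ with $F(\bar u)\cap V\ne\emptyset$ there is a neighborhood $U$ of $\bar u$ with $F(u)\cap V\neq\emptyset$ for all $u\in U$. *)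

From HB Require Import structures.
From mathcomp Require Import all_boot all_order all_algebra.
From mathcomp Require Import all_classical all_reals all_analysis.
Set Implicit Arguments. Unset Strict Implicit. Unset Printing Implicit Defensive.
Import Order.TTheory GRing.Theory Num.Theory.
Import numFieldNormedType.Exports.
Local Open Scope classical_set_scope.
Local Open Scope ring_scope.

Section Defs.
Context {R : realType} {n : nat}.
Notation V := 'rV[R]_n.

Definition inner (u x : V) : R := \sum_(i < n) u ord0 i * x ord0 i.

Definition proper_fun (f : V -> \bar R) : Prop :=
  (forall x, f x != -oo%E) /\ (exists x, f x \is a fin_num).

Definition dom (f : V -> \bar R) : set V := [set x | f x < +oo]%E.

Definition unbounded (A : set V) : Prop :=
  ~ (exists M : R, forall x, A x -> `|x| <= M).

Definition asymp_cone (X : set V) : set V :=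
  [set u | exists (t : nat -> R) (x : nat -> V),
     t @ \oo --> +oo /\ (forall k, X (x k)) /\
     (fun k => (t k)^-1 *: x k) @ \oo --> u].

Definition asymp_fun (f : V -> \bar R) (d : V) : \bar R :=
  ereal_inf [set l | exists (t : nat -> R) (dk : nat -> V),
     t @ \oo --> +oo /\ dk @ \oo --> d /\
     l = limn_einf (fun k => (f (t k *: dk k)%R * ((t k)^-1)%R%:E)%E)].

Definition Kf (f : V -> \bar R) : set V := [set d | (asymp_fun f d <= 0)%E].

Definition fu (f : V -> \bar R) (u : V) (x : V) : \bar R :=
  (f x - (inner u x)%:E)%E.

Definition Sol (f : V -> \bar R) (X : set V) (u : V) : set V :=
  [set x | X x /\ forall y, X y -> (fu f u x <= fu f u y)%E].

Definition lsc_setmap (F : V -> set V) (ubar : V) : Prop :=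
  F ubar !=set0 /\
  forall O : set V, open O -> F ubar `&` O !=set0 ->
    exists2 U, nbhs ubar U & forall u, U u -> F u `&` O !=set0.

Definition convex_set_V (X : set V) : Prop :=
  forall x y (l : R), X x -> X y -> 0 <= l <= 1 ->
    X (l *: x + (1 - l) *: y).

(* convexity of an extended-valued function (convex epigraph) *)
Definition convex_fun (f : V -> \bar R) : Prop :=
  forall x y (a b l : R), (f x <= a%:E)%E -> (f y <= b%:E)%E -> 0 <= l <= 1 ->
    (f (l *: x + (1 - l) *: y)%R <= (l * a + (1 - l) * b)%R%:E)%E.

End Defs.

From HB Require Import structures.
From mathcomp Require Import all_boot all_order all_algebra.
From mathcomp Require Import all_classical all_reals all_analysis.
From mathcomp Require Import lra ring.
Import Order.TTheory GRing.Theory Num.Theory.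
Import numFieldNormedType.Exports.
Local Open Scope classical_set_scope.
Local Open Scope ring_scope.

(* Forward direction: under (b) the tilted level sets
   [{x in X | f_u x <= f_u x0}] are bounded uniformly in small [u]; otherwise
   points of these sets escaping to infinity with [u -> 0] have normalized
   directions clustering at a unit vector of [X^oo `&` K(f)], because
   [f x <= f x0 + <u, x - x0>] forces [f x / |x| -> 0].  Hence [Sol u] is
   nonempty for small [u] (an lsc function attains its minimum on a compact
   set), solutions for [u_k -> 0] stay in a compact set, and their cluster
   points belong to [Sol 0 = [set x0]].
   Converse: [Sol] is monotone, [<u - v, y - x> >= 0] for [y \in Sol u] and
   [x \in Sol v].  If [x0 != x2] both solve at [0], lower semicontinuity gives
   [y \in Sol (e *: (x0 - x2))] close to [x2], and monotonicity
   [<x0 - x2, y - x0> >= 0] fails.  In the convex case a nonzero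
   [d \in X^oo `&` K(f)] yields the ray [x0 + s *: d] inside [X] along which
   [f <= f x0], so [f_(e *: d)] is unbounded below on [X] and [Sol (e *: d)] is
   empty for every [e > 0]. *)

Lemma mx_entry_le_norm {R : realDomainType} m n (A : 'M[R]_(m, n)) i j :
  `|A i j| <= `|A|.
Proof.
rewrite [leRHS]/Num.Def.normr /= mx_normrE.
exact: (@le_bigmax _ R _ 0 (fun ij : 'I_m * 'I_n => `|A ij.1 ij.2|) (i, j)).
Qed.

Section InnerProduct.
Context {R : realType} {n : nat}.
Implicit Types (u v x y : 'rV[R]_n).

Lemma inner0l x : inner 0 x = 0.
Proof. by rewrite /inner big1 // => i _; rewrite mxE mul0r. Qed.

Lemma innerDr u x y : inner u (x + y) = inner u x + inner u y.
Proof. by rewrite /inner -big_split; apply: eq_bigr => i _; rewrite mxE mulrDr. Qed.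

Lemma innerDl u v x : inner (u + v) x = inner u x + inner v x.
Proof. by rewrite /inner -big_split; apply: eq_bigr => i _; rewrite mxE mulrDl. Qed.

Lemma innerZr u a x : inner u (a *: x) = a * inner u x.
Proof. by rewrite /inner mulr_sumr; apply: eq_bigr => i _; rewrite mxE mulrCA. Qed.

Lemma innerZl u a x : inner (a *: u) x = a * inner u x.
Proof. by rewrite /inner mulr_sumr; apply: eq_bigr => i _; rewrite mxE mulrA. Qed.

Lemma innerBr u x y : inner u (x - y) = inner u x - inner u y.
Proof. by rewrite innerDr -scaleN1r innerZr mulN1r. Qed.

Lemma innerBl u v x : inner (u - v) x = inner u x - inner v x.
Proof. by rewrite innerDl -scaleN1r innerZl mulN1r. Qed.

(* The norm of ['rV_n] is the max-norm, whence the factor [n]. *)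
Lemma norm_inner_le u x : `|inner u x| <= n%:R * `|u| * `|x|.
Proof.
rewrite /inner -mulrA mulr_natl -[n in _ *+ n]card_ord -sumr_const.
apply: le_trans (ler_norm_sum _ _ _) _; apply: ler_sum => i _.
by rewrite normrM ler_pM ?mx_entry_le_norm.
Qed.

Lemma inner_self_gt0 x : x != 0 -> 0 < inner x x.
Proof.
move=> x0; rewrite lt_neqAle sumr_ge0 ?andbT => [|i _]; last exact: sqr_ge0.
apply: contra x0 => /eqP/esym/psumr_eq0P x2_eq0; apply/eqP/matrixP => i j.
have /eqP := x2_eq0 (fun k _ => sqr_ge0 (x ord0 k)) j isT.
by rewrite (ord1 i) mxE mulf_eq0 orbb => /eqP.
Qed.

Lemma inner_continuous u : continuous (inner u).
Proof.
move=> x; apply/(@cvgrPdist_lt _ _ _ (nbhs x)) => e e0.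
have K0 : 0 < n%:R * `|u| + 1 by rewrite ltr_pwDr // mulr_ge0.
apply/nbhs_ballP; exists (e / (n%:R * `|u| + 1)); first exact: divr_gt0.
move=> y; rewrite -ball_normE /= ltr_pdivlMr // => xy.
rewrite -innerBr; apply: le_lt_trans (norm_inner_le _ _) (le_lt_trans _ xy).
by rewrite mulrC ler_wpM2l // lerDl.
Qed.

End InnerProduct.

Lemma cvg_subseq {T : topologicalType} {u : nat -> T} {phi : nat -> nat} {l : T} :
  (forall k, (k <= phi k)%N) -> u @ \oo --> l -> u \o phi @ \oo --> l.
Proof.
move=> phik; apply: cvg_comp => P [N _ NP].
by exists N => // k /= Nk; apply: NP; exact: leq_trans (phik k).
Qed.

Lemma cvgyV0 {R : realType} {t : nat -> R} :
  t @ \oo --> +oo -> (fun k => (t k)^-1) @ \oo --> 0.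
Proof. by move=> ty; apply/gtr0_cvgV0 => //; exact: (cvgryPgt _).1 ty 0. Qed.

Section NormedSequences.
Context {R : realType} {V : normedModType R}.

(* [phi] need not be increasing: [phi k] is some index [>= k] at which [y] is
   [1 / k.+1]-close to the cluster point [d]. *)
Lemma compact_cvg_subseq {A : set V} {y : nat -> V} :
  compact A -> (forall k, A (y k)) ->
  exists2 d, A d & exists2 phi : nat -> nat,
    (forall k, (k <= phi k)%N) & y \o phi @ \oo --> d.
Proof.
move=> cA Ay.
have [d [Ad yd]] := cA (y @ \oo) _ (ex_intro2 _ _ 0%N I (fun k _ => Ay k)).
have close k : exists M, (k <= M)%N /\ `|d - y M| < k.+1%:R^-1.
  have kM : (y @ \oo) (y @` [set M | (k <= M)%N]).
    by exists k => // M kM; exists M.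
  have k0 : 0 < k.+1%:R^-1 :> R by rewrite invr_gt0.
  have [_ [[M ? <-]]] := yd _ _ kM (nbhsx_ballx d _ k0).
  by rewrite -ball_normE; exists M.
have [phi phiP] := choice close.
exists d => //; exists phi => [k|]; first by have [] := phiP k.
apply/cvgrPdist_lt => e e0; have [N _ Ne] := near_infty_natSinv_lt (PosNum e0).
by exists N => // k /Ne; apply: lt_trans; have [] := phiP k.
Qed.

Lemma cvg0_harmonic_bound (u : nat -> V) :
  (forall k, `|u k| < harmonic k) -> u @ \oo --> 0.
Proof.
move=> uh; apply/norm_cvg0P/(@squeeze_cvgr _ _ _ _ (cst 0) harmonic).
- by near=> k; rewrite normr_ge0 ltW.
- exact: cvg_cst.
- exact: cvg_harmonic.
Unshelve. all: by end_near. Qed.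

Lemma nbhs0_scale_pos {U : set V} (d : V) : nbhs 0 U -> exists2 e, 0 < e & U (e *: d).
Proof.
move=> /nbhs_ballP[r r0 rU]; have d1 : 0 < `|d| + 1 by rewrite ltr_pwDr.
exists (r / (`|d| + 1)); first exact: divr_gt0.
apply: rU; rewrite -ball_normE /= sub0r normrN normrZ gtr0_norm ?divr_gt0 //.
by rewrite mulrAC ltr_pdivrMr // ltr_pM2l // ltrDl.
Qed.

End NormedSequences.

Section ExtendedReals.
Context {R : realType}.
Local Open Scope ereal_scope.
Implicit Types (v : (\bar R)^nat).

Lemma ereal_lt_between (m e : \bar R) : m < e -> exists a : R, m < a%:E < e.
Proof.
case: m => [r| |]; case: e => [s| |] //=; rewrite ?lte_fin.
- by move=> /midf_lt[rm ms]; exists ((r + s) / 2)%R; rewrite !lte_fin rm ms.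
- by move=> _; exists (r + 1)%R; rewrite lte_fin ltry ltrDl ltr01.
- by move=> _; exists (s - 1)%R; rewrite lte_fin ltNyr gtrBl ltr01.
- by move=> _; exists 0%R; rewrite ltNyr ltry.
Qed.

Lemma limn_einfE v : limn_einf v = ereal_sup (range (einfs v)).
Proof. by rewrite limn_einf_lim; apply/cvg_lim => //; exact: cvg_einfs_sup. Qed.

Lemma limn_einf_lt {v c} : limn_einf v < c -> forall N, exists2 k, (N <= k)%N & v k < c.
Proof.
rewrite limn_einfE => vc N.
have : einfs v N < c by apply: le_lt_trans vc; apply: ereal_sup_ubound; exists N.
by move=> /ereal_inf_lt[_ [k /= Nk <-]]; exists k.
Qed.

Lemma limn_einf_le_frequently v c : (forall N, exists2 k, (N <= k)%N & v k <= c) ->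
  limn_einf v <= c.
Proof.
move=> vc; rewrite limn_einfE.
apply: ub_ereal_sup => _ [N _ <-]; have [k Nk vk] := vc N.
by apply: le_trans vk; apply: ereal_inf_lbound; exists k.
Qed.

Lemma limn_einf_le_cvg v (b : R^nat) (l : R) :
  (\forall k \near \oo, v k <= (b k)%:E) -> b @ \oo --> l -> limn_einf v <= l%:E.
Proof.
move=> vb bl; apply/lee_addgt0Pr => e e0; apply: limn_einf_le_frequently => N.
have [M _ vle] : \forall k \near \oo, v k <= (l + e)%:E.
  near=> k; apply: le_trans (near vb k _) _ => //; rewrite lee_fin ltW //.
  by near: k; apply: (cvgr_lt l) => //; rewrite ltrDl.
by exists (maxn N M); [exact: leq_maxl | apply: vle; exact: leq_maxr].
Unshelve. all: by end_near. Qed.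

End ExtendedReals.

Section LowerSemicontinuity.
Context {R : realType} {T : topologicalType}.
Local Open Scope ereal_scope.
Implicit Types (g : T -> \bar R).

Lemma lsc_le_limn_einf {g} {y : nat -> T} {p} : lower_semicontinuous g ->
  y @ \oo --> p -> g p <= limn_einf (g \o y).
Proof.
move=> lg yp; rewrite leNgt; apply/negP => /ereal_lt_between[a /andP[liminf_a ag]].
have [W Wp gW] := lg p a ag.
have [N _ NW] := yp W Wp.
have [k /NW /gW agy gya] := limn_einf_lt liminf_a N.
by move: gya; rewrite ltNge (ltW agy).
Qed.

Lemma lower_semicontinuousD g (h : T -> R) : lower_semicontinuous g ->
  continuous h -> lower_semicontinuous (fun x => g x + (h x)%:E).
Proof.
move=> lg ch x a; rewrite -lteBlDr // -EFinB => /ereal_lt_between[b /andP[ab bg]].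
have [W Wx gW] := lg x b bg.
have hx : \forall y \near x, (a - b < h y)%R.
  by apply: (cvgr_gt (h x)); [exact: ch | rewrite ltrBlDr -ltrBlDl].
exists (W `&` [set y | (a - b < h y)%R]); first exact: filterI.
move=> y [/gW bgy ahy]; rewrite -lteBlDr // -EFinB; apply: le_lt_trans bgy.
by rewrite lee_fin lerBlDr -lerBlDl ltW.
Qed.

Lemma lsc_compact_min {g} {A : set T} : compact A -> A !=set0 ->
  lower_semicontinuous g -> exists2 x, A x & forall y, A y -> g x <= g y.
Proof.
move=> cA [x0 Ax0] lg; pose m := ereal_inf (g @` A).
have [mleg|] := boolP (m < +oo); last first.
  rewrite -leNgt leye_eq => /eqP my; exists x0 => // y Ay.
  have : m <= g y by apply: ereal_inf_lbound; exists y.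
  by rewrite my leye_eq => /eqP ->; rewrite leey.
(* A cluster point of the strict sublevel sets above [m] minimizes [g]. *)
pose below c := [set x | A x /\ g x < c].
pose F := filter_from [set c | m < c] below.
have PF : ProperFilter F.
  apply: filter_from_proper; last first.
    by move=> c /ereal_inf_lt[_ [x Ax <-] gxc]; exists x.
  apply: filter_from_filter; first by exists +oo.
  move=> c c' mc mc'; exists (Order.min c c'); first by rewrite /= lt_min mc mc'.
  by move=> x [Ax]; rewrite lt_min => /andP[? ?]; split; split.
have FA : F A by exists +oo => // x [].
have [x [Ax Fx]] := cA F PF FA.
exists x => // y Ay; apply: (@le_trans _ _ m); last by apply: ereal_inf_lbound; exists y.
rewrite leNgt; apply/negP => /ereal_lt_between[a /andP[ma agx]].
have [W Wx gW] := lg x a agx.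
have Fa : F (below a%:E) by exists a%:E.
have [z [[_ gza] /gW]] := Fx _ _ Fa Wx.
by rewrite ltNge (ltW gza).
Qed.

End LowerSemicontinuity.

Section CompactRowVectors.
Context {R : realType} {n : nat}.

Lemma closed_normle (M : R) : closed [set x : 'rV[R]_n | `|x| <= M].
Proof.
rewrite -[X in closed X]/(Num.norm @^-1` [set r : R | r <= M]).
apply: preimage_closed; last exact: closed_le.
by move=> x _; exact: norm_continuous.
Qed.

Lemma compact_closedI_normle {A : set 'rV[R]_n} (M : R) :
  closed A -> compact (A `&` [set x | `|x| <= M]).
Proof.
move=> cA; apply: bounded_closed_compact; last exact: closedI cA (closed_normle M).
exists M; split; first exact: num_real.
by move=> M' MM' x [_ /le_trans]; apply; exact: ltW.
Qed.

Lemma compact_unit_sphere : compact [set x : 'rV[R]_n | `|x| = 1].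
Proof.
apply: bounded_closed_compact.
  by exists 1; split => [|M M1 x /= ->]; [exact: num_real | exact: ltW].
rewrite -[X in closed X]/(Num.norm @^-1` [set r : R | r = 1]).
apply: preimage_closed; last exact: closed_eq.
by move=> x _; exact: norm_continuous.
Qed.

End CompactRowVectors.

Section Perturbation.
Context {R : realType} {n : nat}.
Notation V := 'rV[R]_n.
Context {f : V -> \bar R} {X : set V}.

Lemma fu0 x : fu f 0 x = f x.
Proof. by rewrite /fu inner0l sube0. Qed.

Lemma fu_lsc u : lower_semicontinuous f -> lower_semicontinuous (fu f u).
Proof.
move=> lf; apply: lower_semicontinuousD => // x.
exact/continuousN/inner_continuous.
Qed.

Lemma fu_le_bound {u x x0 r0} : f x0 = r0%:E -> (fu f u x <= fu f u x0)%E ->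
  (f x <= (r0 + n%:R * `|u| * (`|x| + `|x0|))%:E)%E.
Proof.
rewrite /fu => ->; rewrite leeBlDr // => /le_trans; apply; rewrite -EFinB -EFinD lee_fin.
have : inner u x - inner u x0 <= n%:R * `|u| * (`|x| + `|x0|).
  rewrite -innerBr; apply: le_trans (ler_norm _) (le_trans (norm_inner_le _ _) _).
  by rewrite ler_wpM2l ?mulr_ge0 ?ler_normB.
lra.
Qed.

Lemma Sol_fin_num {u y} : (forall x, f x != -oo%E) -> (dom f `&` X) !=set0 ->
  Sol f X u y -> f y \is a fin_num.
Proof.
move=> fNy [z [+ Xz]] [_ /(_ z Xz)]; rewrite /dom /fu /=.
by have := fNy y; case: (f y) => // _; case: (f z).
Qed.

Lemma Sol_monotone {u v x y} : Sol f X u y -> Sol f X v x ->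
  f x \is a fin_num -> f y \is a fin_num -> 0 <= inner (u - v) (y - x).
Proof.
move=> [Xy /(_ x) Syx] [Xx /(_ y Xy) Sxy] fx fy; move: Syx Sxy => /(_ Xx).
rewrite /fu -(fineK fx) -(fineK fy) -!EFinB !lee_fin innerBl !innerBr; lra.
Qed.

Lemma escape_asymp_cone_Kf (u x : nat -> V) {x0 r0} {d : V} :
  f x0 = r0%:E -> (forall k, X (x k)) ->
  (forall k, fu f (u k) (x k) <= fu f (u k) x0)%E ->
  u @ \oo --> (0 : V) -> (fun k => `|x k|) @ \oo --> +oo ->
  (fun k => `|x k|^-1 *: x k) @ \oo --> d -> asymp_cone X d /\ Kf f d.
Proof.
move=> fx0 Xx xlev u0 xy xd; split; first by exists (fun k => `|x k|), x.
pose t k := `|x k|; pose b k := r0 * (t k)^-1 + n%:R * `|u k| * (1 + `|x0| * (t k)^-1).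
apply: le_trans (ereal_inf_lbound _) _; first by exists t, (fun k => (t k)^-1 *: x k).
apply: (limn_einf_le_cvg _ b).
  near=> k; have tk : 0 < t k by near: k; exact: (cvgryPgt _).1 xy 0.
  rewrite scalerA mulfV ?gt_eqF // scale1r.
  apply: le_trans (lee_wpmul2r _ (fu_le_bound fx0 (xlev k))) _.
    by rewrite lee_fin invr_ge0 ltW.
  rewrite -EFinM lee_fin.
  suff -> : (r0 + n%:R * `|u k| * (t k + `|x0|)) * (t k)^-1 = b k by [].
  by rewrite /b; field; rewrite gt_eqF.
have tV : (fun k => (t k)^-1) @ \oo --> 0 := cvgyV0 xy.
have nu : (fun k => `|u k|) @ \oo --> (0 : R) by exact: (norm_cvg0P _).2 u0.
suff : b @ \oo --> r0 * 0 + n%:R * 0 * (1 + `|x0| * 0) by rewrite !mulr0 mul0r addr0.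
apply: cvgD; first exact: cvgM (cvg_cst r0) tV.
apply: cvgM; first exact: cvgM (cvg_cst _) nu.
by apply: cvgD; [exact: cvg_cst | exact: cvgM (cvg_cst _) tV].
Unshelve. all: by end_near. Qed.

Lemma fu_level_bounded {x0 r0} : f x0 = r0%:E ->
  asymp_cone X `&` Kf f `<=` [set 0] ->
  exists2 delta, 0 < delta & exists M, forall u x, `|u| < delta -> X x ->
    (fu f u x <= fu f u x0)%E -> `|x| <= M.
Proof.
move=> fx0 recession; apply: contrapT => unbounded.
have escape k : exists ux : V * V, [/\ `|ux.1| < harmonic k, X ux.2,
    (fu f ux.1 ux.2 <= fu f ux.1 x0)%E & k%:R < `|ux.2|].
  apply: contrapT => bounded; apply: unbounded.
  exists (harmonic k); first exact: harmonic_gt0.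
  exists k%:R => u x uk Xx lev; rewrite leNgt; apply/negP => kx; apply: bounded.
  by exists (u, x).
have [ux /all_and4[uk Xx lev kx]] := choice escape.
pose u k := (ux k).1; pose x k := (ux k).2; pose y k := `|x k|^-1 *: x k.
have unit k : `|y k| = 1.
  have xk0 : `|x k| != 0 by rewrite gt_eqF // (le_lt_trans _ (kx k)).
  by rewrite normrZ normrV ?unitfE // normr_id mulVf.
have [d /= d1 [phi phik xd]] := compact_cvg_subseq compact_unit_sphere unit.
have [||||Xd Kd] := escape_asymp_cone_Kf (u \o phi) (x \o phi) fx0 _ _ _ _ xd.
- by move=> k; exact: Xx.
- by move=> k; exact: lev.
- exact/(cvg_subseq phik)/cvg0_harmonic_bound.
- apply/cvgryPge => A; near=> k; apply: le_trans (ltW (kx (phi k))).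
  apply: le_trans (_ : k%:R <= _); last by rewrite ler_nat phik.
  by near: k; exact: nbhs_infty_ger.
by move: d1; rewrite (recession d) // normr0 => /eqP; rewrite eq_sym oner_eq0.
Unshelve. all: by end_near. Qed.

Lemma Sol_neq0 {x0 delta M u} : closed X -> lower_semicontinuous f -> X x0 ->
  (forall u x, `|u| < delta -> X x -> (fu f u x <= fu f u x0)%E -> `|x| <= M) ->
  `|u| < delta -> Sol f X u !=set0.
Proof.
move=> cX lf Xx0 levM ud.
have Ax0 : (X `&` [set x | `|x| <= M]) x0 by split => //; exact: levM ud Xx0 _.
have [y [Xy _] ymin] := lsc_compact_min (compact_closedI_normle M cX)
  (ex_intro _ x0 Ax0) (fu_lsc u lf).
exists y; split => // w Xw; have [wx0|/ltW] := leP (fu f u w) (fu f u x0).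
  by apply: ymin; split => //; exact: levM ud Xw wx0.
exact/le_trans/ymin.
Qed.

Lemma Sol0_of_cvg (u y : nat -> V) p : closed X -> lower_semicontinuous f ->
  (forall x, f x != -oo%E) -> (forall k, Sol f X (u k) (y k)) ->
  u @ \oo --> (0 : V) -> y @ \oo --> p -> Sol f X 0 p.
Proof.
move=> cX lf fNy Sy u0 yp; split.
  by apply: (closed_cvg _ cX _ _ yp); apply: nearW => k; have [] := Sy k.
move=> w Xw; rewrite !fu0; have := fNy w.
case Efw : (f w) => [r| |] // _; last exact: leey.
apply: le_trans (lsc_le_limn_einf lf yp) _.
apply: (limn_einf_le_cvg _ (fun k => r + n%:R * `|u k| * (`|y k| + `|w|))).
  by apply: nearW => k; exact: fu_le_bound Efw ((Sy k).2 w Xw).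
have nu : (fun k => `|u k|) @ \oo --> (0 : R) by exact: (norm_cvg0P _).2 u0.
suff : (fun k => r + n%:R * `|u k| * (`|y k| + `|w|)) @ \oo -->
    r + n%:R * 0 * (`|p| + `|w|) by rewrite mulr0 mul0r addr0.
apply: cvgD; first exact: cvg_cst.
apply: cvgM; first exact: cvgM (cvg_cst _) nu.
by apply: cvgD; [exact: cvg_norm | exact: cvg_cst].
Qed.

Lemma lsc_Sol_of_unique {x0} : proper_fun f -> lower_semicontinuous f -> closed X ->
  (dom f `&` X) !=set0 -> Sol f X 0 = [set x0] ->
  asymp_cone X `&` Kf f `<=` [set 0] -> lsc_setmap (Sol f X) 0.
Proof.
move=> pf lf cX dX S0 recession.
have Sx0 : Sol f X 0 x0 by rewrite S0.
pose r0 := fine (f x0).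
have fx0 : f x0 = r0%:E by rewrite fineK // (Sol_fin_num pf.1 dX Sx0).
have [delta delta0 [M levM]] := fu_level_bounded fx0 recession.
split=> [|O oO [_ [/[!S0] -> Ox0]]]; first by exists x0.
apply: contrapT => nolsc.
have escape k : exists uy : V * V,
    [/\ `|uy.1| < delta, `|uy.1| < harmonic k, Sol f X uy.1 uy.2 & ~ O uy.2].
  apply: contrapT => inO; apply: nolsc.
  exists (ball 0 (Order.min delta (harmonic k))).
    by apply: nbhsx_ballx; rewrite lt_min delta0 harmonic_gt0.
  move=> u; rewrite -ball_normE /= sub0r normrN lt_min => /andP[ud uk].
  have [y Sy] := Sol_neq0 cX lf Sx0.1 levM ud.
  apply: contrapT => noO; apply: inO; exists (u, y); split => // Oy.
  by apply: noO; exists y.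
have [uy /all_and4[ud uk Sy notO]] := choice escape.
pose u k := (uy k).1; pose y k := (uy k).2.
have yM k : (X `&` [set x | `|x| <= M]) (y k).
  by have [Xy ymin] := Sy k; split => //; exact: levM (ud k) Xy (ymin x0 Sx0.1).
have [p _ [phi phik yp]] := compact_cvg_subseq (compact_closedI_normle M cX) yM.
have : Sol f X 0 p.
  apply: (Sol0_of_cvg (u \o phi)) cX lf pf.1 (fun k => Sy (phi k)) _ yp.
  exact/(cvg_subseq phik)/cvg0_harmonic_bound.
rewrite S0 => /= px0; move: yp; rewrite px0 => /(_ O (open_nbhs_nbhs (conj oO Ox0))).
by move=> [N _ /(_ N (leqnn N))]; exact: notO.
Qed.

Lemma Sol0_singleton_of_lsc : proper_fun f -> (dom f `&` X) !=set0 ->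
  lsc_setmap (Sol f X) 0 -> exists x0, Sol f X 0 = [set x0].
Proof.
move=> pf dX [[x0 Sx0] lscS]; exists x0; apply/seteqP; split => [x2 Sx2|_ -> //].
apply: contrapT => /eqP x2x0; pose d := x0 - x2.
have d0 : d != 0 by rewrite subr_eq0 eq_sym.
pose q := inner d d; have q0 : 0 < q := inner_self_gt0 _ d0.
have K0 : 0 < n%:R * `|d| + 1 by rewrite ltr_pwDr // mulr_ge0.
pose r := q / (n%:R * `|d| + 1); have r0 : 0 < r by rewrite divr_gt0.
have [U U0 US] :=
  lscS (ball x2 r) (ball_open _ _) (ex_intro _ x2 (conj Sx2 (ballxx _ r0))).
have [e e0 /US[y [Sy]]] := nbhs0_scale_pos d U0.
rewrite -ball_normE /= distrC => yx2.
have := Sol_monotone Sy Sx0 (Sol_fin_num pf.1 dX Sx0) (Sol_fin_num pf.1 dX Sy).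
rewrite subr0 innerZl (pmulr_rge0 _ e0).
have -> : y - x0 = (y - x2) - d by rewrite /d opprB addrA subrK.
rewrite innerBr subr_ge0 leNgt => /negP; apply.
apply: le_lt_trans (ler_norm _) (le_lt_trans (norm_inner_le _ _) _).
apply: le_lt_trans (_ : _ <= (n%:R * `|d| + 1) * `|y - x2|) _.
  by rewrite ler_wpM2r ?lerDl.
have Kr : (n%:R * `|d| + 1) * r = q by rewrite mulrC divfK ?lt0r_neq0.
by rewrite -/q -Kr ltr_pM2l.
Qed.

Lemma asymp_cone0 {x0} : X x0 -> asymp_cone X 0.
Proof.
move=> Xx0; exists (fun k => k%:R), (fun=> x0); split; first exact: cvgr_idn.
split=> //; rewrite -(scale0r x0); apply: cvgZ; [exact: cvgyV0 cvgr_idn | exact: cvg_cst].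
Qed.

Lemma Kf0 {x0 r0} : f x0 = r0%:E -> Kf f 0.
Proof.
move=> fx0; rewrite /Kf /=; apply: le_trans (ereal_inf_lbound _) _.
  exists (fun k => k%:R), (fun k => k%:R^-1 *: x0); split; first exact: cvgr_idn.
  split=> //; rewrite -(scale0r x0).
  by apply: cvgZ; [exact: cvgyV0 cvgr_idn | exact: cvg_cst].
apply: (limn_einf_le_cvg _ (fun k => r0 * k%:R^-1)).
  near=> k; have k0 : k%:R != 0 :> R by rewrite pnatr_eq0 -lt0n; near: k; exists 1%N.
  by rewrite scalerA mulfV // scale1r fx0.
by rewrite -(mulr0 r0); exact: cvgM (cvg_cst r0) (cvgyV0 cvgr_idn).
Unshelve. all: by end_near. Qed.

Lemma asymp_cone_ray {x d s} : closed X -> convex_set_V X -> X x ->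
  asymp_cone X d -> 0 <= s -> X (x + s *: d).
Proof.
move=> cX cvX Xx [t [z [ty [Xz zd]]]] s0.
have tV := cvgyV0 ty.
pose w k := (s / t k) *: z k + (1 - s / t k) *: x.
apply: (closed_cvg _ cX _ _ (_ : w @ \oo --> x + s *: d)).
  near=> k; have stk : s < t k by near: k; exact: (cvgryPgt _).1 ty s.
  have t0 : 0 < t k := le_lt_trans s0 stk.
  by apply: cvX => //; rewrite divr_ge0 ?(ltW t0) //= ler_pdivrMr // mul1r ltW.
have -> : w = fun k => s *: ((t k)^-1 *: z k) + x - (s * (t k)^-1) *: x.
  by apply/funext => k; rewrite /w scalerA scalerBl scale1r addrA.
have -> : x + s *: d = s *: d + x - (s * 0) *: x by rewrite mulr0 scale0r subr0 addrC.
apply: cvgB; last by apply: cvgZ; [exact: cvgM (cvg_cst s) tV | exact: cvg_cst].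
by apply: cvgD; [apply: cvgZ; [exact: cvg_cst | exact: zd] | exact: cvg_cst].
Unshelve. all: by end_near. Qed.

Lemma Kf_ray {x d s r} : convex_fun f -> lower_semicontinuous f ->
  f x = r%:E -> Kf f d -> 0 <= s -> (f (x + s *: d) <= r%:E)%E.
Proof.
move=> cvf lf fx Kd; rewrite le_eqVlt => /orP[/eqP <-|s0].
  by rewrite scale0r addr0 fx.
apply/lee_addgt0Pr => e e0; pose eps := e / (2 * s).
have /ereal_inf_lt[_ [t [z [ty [zd ->]]]] liminf_eps] : (asymp_fun f d < eps%:E)%E.
  by apply: le_lt_trans Kd _; rewrite lte_fin divr_gt0 // mulr_gt0.
(* [w k] is the convex combination of [x] and [t k *: z k] with weight [s / t k]. *)
pose w k := x - (s / t k) *: x + s *: z k.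
have wd : w @ \oo --> x + s *: d.
  have -> : x + s *: d = x - (s * 0) *: x + s *: d by rewrite mulr0 scale0r subr0.
  apply: cvgD; last by apply: cvgZ; [exact: cvg_cst | exact: zd].
  apply: cvgB; first exact: cvg_cst.
  by apply: cvgZ; [exact: cvgM (cvg_cst s) (cvgyV0 ty) | exact: cvg_cst].
apply: le_trans (lsc_le_limn_einf lf wd) _; apply: limn_einf_le_frequently => N.
have [M _ tM] : \forall k \near \oo, s < t k /\ 2 * s * `|r| / e < t k.
  by near=> k; split; near: k; exact: (cvgryPgt _).1 ty _.
have [k Nk vk] := limn_einf_lt liminf_eps (maxn N M).
have [stk rtk] := tM k (leq_trans (leq_maxr _ _) Nk).
exists k; first exact: leq_trans (leq_maxl _ _) Nk.
have t0 : 0 < t k := lt_trans s0 stk.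
move: vk; rewrite lte_pdivrMr // -EFinM => /ltW fz; pose l := s / t k.
have l01 : 0 <= 1 - l <= 1.
  by rewrite /l subr_ge0 gerBl ler_pdivrMr // mul1r (ltW stk) divr_ge0 // ltW.
have fxr : (f x <= r%:E)%E by rewrite fx.
have := cvf _ _ _ _ _ fxr fz l01; rewrite subKr.
have -> : (1 - l) *: x + l *: (t k *: z k) = w k.
  by rewrite /w /l scalerA divfK ?gt_eqF // scalerBl scale1r.
move=> /le_trans; apply; rewrite -EFinD lee_fin.
have -> : l * (eps * t k) = e / 2 by rewrite /l /eps; field; rewrite !gt_eqF.
have : l * `|r| <= e / 2.
  move: rtk; rewrite /l ltr_pdivrMr // => rtk.
  by rewrite mulrAC ler_pdivrMr //; lra.
have : - (l * r) <= l * `|r|.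
  by rewrite -mulrN ler_wpM2l ?divr_ge0 ?(ltW s0) ?(ltW t0) // -normrN ler_norm.
lra.
Unshelve. all: by end_near. Qed.

Lemma Sol_empty_of_ray u x0 d r0 : (forall x, f x != -oo%E) ->
  (forall s, 0 <= s -> X (x0 + s *: d) /\ (f (x0 + s *: d) <= r0%:E)%E) ->
  0 < inner u d -> Sol f X u = set0.
Proof.
move=> fNy ray ud; apply/seteqP; split => // z [Xz zmin].
have [Xx0 fx0] := ray 0 (lexx 0); rewrite scale0r addr0 in Xx0 fx0.
have dx0 : (dom f `&` X) x0 by split => //; exact: le_lt_trans fx0 (ltry r0).
pose c := fine (f z); have fz : f z = c%:E.
  by rewrite fineK // (Sol_fin_num fNy (ex_intro _ x0 dx0) (conj Xz zmin)).
pose C := c - inner u z; pose D := r0 - inner u x0.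
pose s := (`|C| + `|D| + 1) / inner u d.
have s0 : 0 <= s by rewrite divr_ge0 ?ltW // addr_ge0.
have [Xs fs] := ray s s0; have := le_trans (zmin _ Xs) (leeB fs (lexx _)).
rewrite /fu fz -!EFinB lee_fin innerDr innerZr divfK ?gt_eqF // -/C => ineq.
have := ler_norm (- C); have := ler_norm D; rewrite normrN /D; lra.
Qed.

Lemma asymp_cone_Kf_trivial_of_lsc : proper_fun f -> lower_semicontinuous f ->
  closed X -> (dom f `&` X) !=set0 -> convex_set_V X -> convex_fun f ->
  lsc_setmap (Sol f X) 0 -> asymp_cone X `&` Kf f = [set 0].
Proof.
move=> pf lf cX dX cvX cvf [[x0 Sx0] lscS].
pose r0 := fine (f x0).
have fx0 : f x0 = r0%:E by rewrite fineK // (Sol_fin_num pf.1 dX Sx0).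
apply/seteqP; split => [d [Xd Kd]|_ ->]; last first.
  exact: conj (asymp_cone0 Sx0.1) (Kf0 fx0).
apply: contrapT => /eqP d0.
have [U U0 US] := lscS setT openT (ex_intro _ x0 (conj Sx0 I)).
have [e e0 /US[z [Sz _]]] := nbhs0_scale_pos d U0.
suff : Sol f X (e *: d) = set0 by move=> S0; move: Sz; rewrite S0.
apply: (Sol_empty_of_ray _ x0 d r0 pf.1) => [s s0|].
  by split; [exact: asymp_cone_ray cX cvX Sx0.1 Xd s0 | exact: Kf_ray cvf lf fx0 Kd s0].
by rewrite innerZl mulr_gt0 // inner_self_gt0.
Qed.

End Perturbation.

Theorem mainTheorem7 (R : realType) (n : nat)
  (f : 'rV[R]_n -> \bar R) (X : set 'rV[R]_n) :
  proper_fun f -> lower_semicontinuous f ->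
  closed X -> X !=set0 -> unbounded (dom f `&` X) ->
  ( ((exists x0, Sol f X 0 = [set x0]) /\ asymp_cone X `&` Kf f = [set 0]) ->
      lsc_setmap (Sol f X) 0 )
  /\
  ( lsc_setmap (Sol f X) 0 ->
      (exists x0, Sol f X 0 = [set x0]) /\
      (convex_set_V X -> convex_fun f -> asymp_cone X `&` Kf f = [set 0]) ).
Proof.
move=> pf lf cX _ unb.
have dX : (dom f `&` X) !=set0.
  by apply: contrapT => dX0; apply: unb; exists 0 => x dx; exfalso; apply: dX0; exists x.
split=> [[[x0 S0] recession] | lscS].
  by apply: (lsc_Sol_of_unique pf lf cX dX S0); rewrite recession.
split; first exact: Sol0_singleton_of_lsc pf dX lscS.
by move=> cvX cvf; exact: asymp_cone_Kf_trivial_of_lsc.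
Qed.
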